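(* Let $\Gamma$ be a distance-regular graph with classical parameters $(D,b,\alpha,\beta)$ such that $b\ge2$ and $D\ge3$, which is geometric with respect to a set $\mathcal C$ of Delsarte cliques. Then: for each $j\in\{0,1,\dots,D-1\}$, each $C\in\mathcal C$ and each vertex $x$ at distance $j$ from $C$, the number of vertices of $C$ at distance $j$ from $x$ is $\phi_j=1+\alpha[j]$; and for each $j\in\{1,\dots,D\}$ and vertices $x,y$ at distance $j$, the number of cliques in $\mathcal C$ containing $x$ and at distance $j-1$ from $y$ is $\tau_j=[j]$.
   Context: Distance-regular graph with intersection numbers $b_i,c_i$, valency $k=b_0$. For integer $b\ne1$, $[j]=\frac{b^j-1}{b-1}$. Classical parameters $(D,b,\alpha,\beta)$: diameter $D$, $b_i=([D]-[i])(\beta-\alpha[i])$, $c_i=[i](1+\alpha[i-1])$. A Delsarte clique is a clique with $1+\frac{k}{-\theta_{\min}}$ vertices, $\theta_{\min}$ the smallest adjacency eigenvalue; geometric with respect to $\mathcal C$ means every edge lies in exactly one member of $\mathcal C$. Distance from a vertex to a clique $C$: $\min_{y\in C}d(x,y)$. *)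

From HB Require Import structures.
From mathcomp Require Import all_boot all_order all_algebra.
Set Implicit Arguments. Unset Strict Implicit. Unset Printing Implicit Defensive.
Import Order.TTheory GRing.Theory Num.Theory.

Section Graph.
Variable n : nat.
Variable e : rel 'I_n.

Definition simple_graph : Prop := symmetric e /\ irreflexive e.

Fixpoint ball (x : 'I_n) (m : nat) : {set 'I_n} :=
  match m with
  | 0 => [set x]
  | m'.+1 => ball x m' :|: [set z | [exists y in ball x m', e y z]]
  end.

(* graph distance (correct for connected graphs; all distances are < n) *)
Definition gdist (x y : 'I_n) : nat := find (fun m => y \in ball x m) (iota 0 n).

Definition connected_graph : Prop := forall x y, connect e x y.

Definition diameter_is (D : nat) : Prop :=
  (exists x y, gdist x y = D) /\ (forall x y, gdist x y <= D).

Definition distance_regular (D : nat) (bi ci : nat -> nat) : Prop :=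
  [/\ simple_graph, connected_graph, diameter_is D,
      (forall x y, 1 <= gdist x y ->
         #|[set z | e y z & gdist x z == (gdist x y).-1]| = ci (gdist x y)) &
      (forall x y, gdist x y < D ->
         #|[set z | e y z & gdist x z == (gdist x y).+1]| = bi (gdist x y))].

Definition clique (C : {set 'I_n}) : Prop :=
  forall x y, x \in C -> y \in C -> x != y -> e x y.

(* distance from a vertex to a (nonempty) set of vertices *)
Definition gdistC (x : 'I_n) (C : {set 'I_n}) : nat :=
  \big[minn/n]_(y in C) gdist x y.

Variable R : rcfType.

Definition adjmx : 'M[R]_n := \matrix_(i, j) ((e i j)%:R)%R.

Definition min_eigenvalue (theta : R) : Prop :=
  eigenvalue adjmx theta /\ (forall t, eigenvalue adjmx t -> (theta <= t)%R).

Definition delsarte_clique (k : nat) (C : {set 'I_n}) : Prop :=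
  clique C /\
  exists theta, min_eigenvalue theta /\
    (#|C|%:R = 1 + k%:R / (- theta) :> R)%R.

Definition geometric_wrt (k : nat) (CC : {set {set 'I_n}}) : Prop :=
  (forall C, C \in CC -> delsarte_clique k C) /\
  (forall x y, e x y -> #|[set C in CC | (x \in C) && (y \in C)]| = 1%N).

End Graph.

Definition gbr (R : fieldType) (b : nat) (j : nat) : R :=
  (((b%:R) ^+ j - 1) / (b%:R - 1))%R.

Definition classical_params (R : fieldType) (D : nat) (bi ci : nat -> nat)
  (b : nat) (alpha beta : R) : Prop :=
  (forall i, (i < D)%N -> (bi i)%:R = (gbr R b D - gbr R b i) * (beta - alpha * gbr R b i))%R /\
  (forall i, (1 <= i <= D)%N -> (ci i)%:R = gbr R b i * (1 + alpha * gbr R b i.-1))%R.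

(* The least eigenvalue of the graph is theta = -[D].  Summing an eigenvector
   over the distance shells around a vertex solves the three-term recurrence of
   the intersection numbers backwards, so t is an eigenvalue exactly when the
   cosine sequence u(t) satisfies the end condition at j = D.  For theta the
   ratios u_(j+1)/u_j are rho_j = (1 + alpha[j]) / (alpha[j] - beta) and the end
   condition holds; for t < theta the ratios stay below rho_j and it fails.
   Hence a Delsarte clique has 1 + beta vertices, every vertex lies in
   [D] = -theta cliques of the family, and
   sum_C (sum_(y in C) f y)^2 = f^T (A - theta I) f, which vanishes for the
   theta-eigenvector f = u(theta) o d(x, _): each clique sums f to zero.  A
   clique at distance j from x only meets the distances j and j + 1, so this zero
   sum forces 1 + alpha[j] of its vertices to lie at distance j.  Counting the
   pairs (z, C) with z a neighbour of x closer to y and C the clique through x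
   and z then gives c_j = tau_j (1 + alpha[j-1]), i.e. tau_j = [j]. *)

From HB Require Import structures.
From mathcomp Require Import all_boot all_order all_algebra.
From mathcomp Require Import zify ring.
Import Order.TTheory GRing.Theory Num.Theory.
Set Implicit Arguments. Unset Strict Implicit. Unset Printing Implicit Defensive.

Lemma sum_nat_indicator (T : finType) (P Q : pred T) :
  \sum_(i | P i) (Q i : nat) = #|[set i | P i & Q i]|.
Proof. by rewrite -sum1dep_card big_mkcondr; apply: eq_bigr => i _; case: (Q i). Qed.

Lemma sumr_indicator (R : pzSemiRingType) (T : finType) (P Q : pred T) :
  (\sum_(i | P i) (Q i)%:R = #|[set i | P i & Q i]|%:R :> R)%R.
Proof. by rewrite -sum_nat_indicator natr_sum. Qed.

Section Graph.
Variables (n : nat) (e : rel 'I_n).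
Hypotheses (e_sym : symmetric e) (e_irr : irreflexive e) (e_conn : connected_graph e).

Local Notation ball := (ball e).
Local Notation gdist := (gdist e).

Lemma ballS x m y :
  (y \in ball x m.+1) = (y \in ball x m) || [exists z in ball x m, e z y].
Proof. by rewrite /= in_setU in_set. Qed.

Lemma ball_center x m : x \in ball x m.
Proof. by elim: m => [|m IHm]; rewrite ?in_set1 // ballS IHm. Qed.

Lemma ball_mono x m m' : m <= m' -> {subset ball x m <= ball x m'}.
Proof.
move=> le_mm' y; elim: m' le_mm' => [|m' IHm']; first by rewrite leqn0 => /eqP ->.
by rewrite leq_eqVlt => /predU1P [-> //|/IHm' sub_m yB]; rewrite ballS sub_m.
Qed.

Lemma ball_edge x m y z : y \in ball x m -> e y z -> z \in ball x m.+1.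
Proof. by move=> yB eyz; rewrite ballS; apply/orP; right; apply/existsP; exists y; rewrite yB. Qed.

Lemma path_ball x p : path e x p -> last x p \in ball x (size p).
Proof.
elim/last_ind: p => [|p z IHp]; first by rewrite ball_center.
by rewrite rcons_path last_rcons size_rcons => /andP [/IHp zB /(ball_edge zB)].
Qed.

Lemma ball_trans x y z m m' :
  y \in ball x m -> z \in ball y m' -> z \in ball x (m + m').
Proof.
move=> yB; elim: m' z => [|m' IHm'] z; first by rewrite in_set1 addn0 => /eqP ->.
rewrite ballS addnS => /orP [/IHm' zB|/existsP [w /andP [/IHm' wB ewz]]].
  exact: ball_mono (leqnSn _) _ zB.
exact: ball_edge wB ewz.
Qed.

Lemma ball_sym x y m : y \in ball x m -> x \in ball y m.
Proof.
elim: m y => [|m IHm] y; first by rewrite !in_set1 eq_sym.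
rewrite ballS => /orP [/IHm xB|/existsP [w /andP [/IHm xB ewy]]].
  exact: ball_mono (leqnSn _) _ xB.
have wB : w \in ball y 1 by apply: ball_edge (ball_center y 0) _; rewrite e_sym.
by have := ball_trans wB xB; rewrite add1n.
Qed.

Lemma ball_all x y : y \in ball x n.-1.
Proof.
have [p /shortenP [p' p'_path p'_uniq _] ->] := connectP (e_conn x y).
apply: ball_mono (path_ball p'_path).
have := max_card (mem (x :: p')); rewrite card_ord (card_uniqP p'_uniq) /= => lt_p.
by rewrite -ltnS (ltn_predK lt_p).
Qed.

Lemma gdist_has x y : has (fun m => y \in ball x m) (iota 0 n).
Proof.
apply/hasP; exists n.-1; last exact: ball_all.
by rewrite mem_iota; have := ltn_ord x; lia.
Qed.

Lemma gdist_lt x y : gdist x y < n.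
Proof. by have := gdist_has x y; rewrite has_find size_iota. Qed.

Lemma gdist_ball x y : y \in ball x (gdist x y).
Proof.
have := nth_find 0 (gdist_has x y).
by rewrite nth_iota; last exact: gdist_lt x y.
Qed.

Lemma mem_ballE x y m : (y \in ball x m) = (gdist x y <= m).
Proof.
apply/idP/idP => [yB|]; last by move/ball_mono; apply; exact: gdist_ball.
rewrite leqNgt; apply/negP => lt_m; have := before_find 0 lt_m.
rewrite nth_iota; last exact: ltn_trans lt_m (gdist_lt x y).
by rewrite add0n yB.
Qed.

Lemma gdist_eq0 x y : (gdist x y == 0) = (x == y).
Proof. by rewrite -leqn0 -mem_ballE in_set1 eq_sym. Qed.

Lemma gdistxx x : gdist x x = 0.
Proof. by apply/eqP; rewrite gdist_eq0. Qed.

Lemma gdist_neighbor x y z : e y z -> gdist x z <= (gdist x y).+1.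
Proof. by move=> eyz; rewrite -mem_ballE (ball_edge (gdist_ball x y) eyz). Qed.

Lemma gdist_sym x y : gdist x y = gdist y x.
Proof.
by apply/eqP; rewrite eqn_leq -!mem_ballE; apply/andP; split; apply/ball_sym/gdist_ball.
Qed.

Lemma gdist_pred x y j : gdist x y = j.+1 -> exists2 z, e z y & gdist x z = j.
Proof.
move=> dxy; have := gdist_ball x y; rewrite dxy ballS.
case/orP => [|/existsP [z /andP [zB ezy]]]; first by rewrite mem_ballE dxy ltnn.
exists z => //; apply/eqP; rewrite eqn_leq -mem_ballE zB /= -ltnS -dxy.
exact: gdist_neighbor.
Qed.

Lemma gdist1E x y : (gdist x y == 1) = e x y.
Proof.
apply/idP/idP => [/eqP /gdist_pred [z ezy /eqP] | exy].
  by rewrite gdist_eq0 => /eqP ->.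
have := gdist_neighbor x exy; rewrite gdistxx eqn_leq => -> /=.
by rewrite lt0n gdist_eq0; apply: contraTneq exy => ->; rewrite e_irr.
Qed.

Lemma gdist_neighbor_range x y z :
  e y z -> (gdist x y).-1 <= gdist x z <= (gdist x y).+1.
Proof.
move=> eyz; rewrite gdist_neighbor //=.
have := gdist_neighbor x (y := z) (z := y); rewrite e_sym => /(_ eyz); lia.
Qed.

Lemma gdistC_le x (C : {set 'I_n}) y : y \in C -> gdistC e x C <= gdist x y.
Proof. by move=> yC; rewrite /gdistC -minEnat -leEnat; apply: bigmin_le_cond. Qed.

Lemma gdistC_attained x (C : {set 'I_n}) y0 :
  y0 \in C -> exists2 y, y \in C & gdistC e x C = gdist x y.
Proof.
move=> y0C; rewrite /gdistC -minEnat.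
have [y yC ->] := eq_bigmin y0 (mem C) (gdist x) y0C (fun y _ => ltnW (gdist_lt x y)).
by exists y.
Qed.

Lemma gdistC_eq x (C : {set 'I_n}) y :
  y \in C -> (forall w, w \in C -> gdist x y <= gdist x w) -> gdistC e x C = gdist x y.
Proof.
move=> yC min_y; apply/eqP; rewrite eqn_leq gdistC_le //=.
rewrite /gdistC -minEnat -leEnat; apply/bigmin_geP.
by split; [exact: ltnW (gdist_lt x y)|exact: min_y].
Qed.

Lemma clique_gdist x (C : {set 'I_n}) y : clique e C -> y \in C ->
  gdistC e x C <= gdist x y <= (gdistC e x C).+1.
Proof.
move=> C_clique yC; rewrite gdistC_le //=.
have [y0 y0C ->] := gdistC_attained x yC.
have [->|yy0] := eqVneq y y0; first exact: leqnSn.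
by apply: gdist_neighbor; apply: C_clique; rewrite // eq_sym.
Qed.

Lemma gdistC_clique_closer x (C : {set 'I_n}) y z : clique e C -> y \in C -> z \in C ->
  gdist x z = (gdist x y).-1 -> gdistC e x C = (gdist x y).-1.
Proof.
move=> C_clique yC zC dxz; rewrite -dxz; apply: gdistC_eq => // w wC; rewrite dxz.
have [->|wy] := eqVneq w y; first exact: leq_pred.
have eyw : e y w by apply: C_clique; rewrite // eq_sym.
by case/andP: (gdist_neighbor_range x eyw).
Qed.

Lemma sum_neighbors_sym (R : pzSemiRingType) (f g : 'I_n -> R) :
  (\sum_y f y * \sum_(z | e y z) g z = \sum_y (\sum_(z | e y z) f z) * g y)%R.
Proof.
under eq_bigr => y _ do rewrite mulr_sumr big_mkcond /=.
under [RHS]eq_bigr => y _ do rewrite mulr_suml big_mkcond /=.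
by rewrite exchange_big; apply: eq_bigr => y _; apply: eq_bigr => z _; rewrite e_sym.
Qed.

Lemma gdist_intermediate x y t : t <= gdist x y -> exists z, gdist x z = t.
Proof.
have [m dxy] : exists m, gdist x y = m by exists (gdist x y).
rewrite dxy; elim: m y dxy => [|m IHm] y dxy.
  by rewrite leqn0 => /eqP ->; exists y.
rewrite leq_eqVlt => /predU1P [->|]; first by exists y.
by have [z _ dxz] := gdist_pred dxy; rewrite ltnS; apply: IHm dxz.
Qed.

Section DistanceRegular.
Variables (R : rcfType) (D : nat) (bi ci : nat -> nat).
Hypothesis diam : diameter_is e D.
Hypothesis D_gt0 : 0 < D.
Hypothesis ci_card : forall x y, 1 <= gdist x y ->
  #|[set z | e y z & gdist x z == (gdist x y).-1]| = ci (gdist x y).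
Hypothesis bi_card : forall x y, gdist x y < D ->
  #|[set z | e y z & gdist x z == (gdist x y).+1]| = bi (gdist x y).

Lemma gdist_le_diam x y : gdist x y <= D.
Proof. by case: diam. Qed.

Lemma exists_gdist t : t <= D -> exists x y, gdist x y = t.
Proof.
case: diam => [[x [y dxy]] _] le_tD.
have [z dxz] : exists z, gdist x z = t by apply: (gdist_intermediate (y := y)); rewrite dxy.
by exists x, z.
Qed.

Lemma ci_gt0 i : 0 < i <= D -> 0 < ci i.
Proof.
case/andP => i_gt0 /exists_gdist [x [y dxy]]; rewrite -dxy -ci_card ?dxy // card_gt0.
have [z ezy dxz] : exists2 z, e z y & gdist x z = i.-1 by apply: gdist_pred; rewrite prednK.
by apply/set0Pn; exists z; rewrite inE e_sym ezy dxz eqxx.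
Qed.

Lemma bi_gt0 i : i < D -> 0 < bi i.
Proof.
move=> lt_iD; have [x [y dxy]] := exists_gdist lt_iD; have [z ezy dxz] := gdist_pred dxy.
have := bi_card (x := x) (y := z); rewrite dxz => /(_ lt_iD) <-.
by rewrite card_gt0; apply/set0Pn; exists y; rewrite inE ezy dxy eqxx.
Qed.

Lemma valency y : #|[set z | e y z]| = bi 0.
Proof.
have := bi_card (x := y) (y := y); rewrite gdistxx => /(_ D_gt0) <-.
by apply: eq_card => z; rewrite !inE -gdist1E andb_idl // => /eqP ->.
Qed.

Local Open Scope ring_scope.

Definition kR : R := (bi 0)%:R.
(* [c_0] and [b_D] are not intersection numbers; setting them to [0] makes the
   three-term recurrence below hold at both ends. *)
Definition cR j : R := if j == 0%N then 0 else (ci j)%:R.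
Definition bR j : R := if (j < D)%N then (bi j)%:R else 0.
Definition aR j : R := kR - cR j - bR j.

Lemma kR_gt0 : 0 < kR.
Proof. by rewrite ltr0n bi_gt0. Qed.

Lemma bR_gt0 j : (j < D)%N -> 0 < bR j.
Proof. by move=> lt_jD; rewrite /bR lt_jD ltr0n bi_gt0. Qed.

Lemma cR_gt0 j : (0 < j <= D)%N -> 0 < cR j.
Proof. by case/andP => j_gt0 le_jD; rewrite /cR gtn_eqF // ltr0n ci_gt0 ?j_gt0. Qed.

Lemma card_neighbors_closer x y :
  #|[set z | e y z & gdist x z == (gdist x y).-1]|%:R = cR (gdist x y).
Proof.
rewrite /cR; case: eqP => [dxy0|/eqP]; last by rewrite -lt0n => /ci_card ->.
rewrite (_ : [set _ | _] = set0) ?cards0 //; apply/setP => z; rewrite !inE dxy0.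
move/eqP: dxy0; rewrite gdist_eq0 => /eqP <-.
by apply/negbTE/andP => -[exz]; rewrite gdist_eq0 => /eqP xz; rewrite xz e_irr in exz.
Qed.

Lemma card_neighbors_farther x y :
  #|[set z | e y z & gdist x z == (gdist x y).+1]|%:R = bR (gdist x y).
Proof.
rewrite /bR; case: ltnP => [/bi_card -> //|le_Dd].
rewrite (_ : [set _ | _] = set0) ?cards0 //; apply/setP => z; rewrite !inE.
apply/negbTE/andP => -[_ /eqP dxz]; have := gdist_le_diam x z.
by rewrite dxz ltnNge le_Dd.
Qed.

Lemma sum_neighbors_split x y (F : nat -> R) : let j := gdist x y in
  \sum_(z | e y z) F (gdist x z) =
    F j.-1 * #|[set z | e y z & gdist x z == j.-1]|%:R
  + F j * #|[set z | e y z & gdist x z == j]|%:R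
  + F j.+1 * #|[set z | e y z & gdist x z == j.+1]|%:R.
Proof.
rewrite /= -!sumr_indicator !mulr_sumr -!big_split; apply: eq_bigr => z eyz /=.
have := gdist_neighbor_range x eyz.
have dxz1 : gdist x y = 0%N -> gdist x z = 1%N.
  by move/eqP; rewrite gdist_eq0 => /eqP xy; apply/eqP; rewrite gdist1E xy.
move: dxz1; set d := gdist x z; set j := gdist x y => dxz1 range.
have [d1|d1] := eqVneq d j.-1; have [d2|d2] := eqVneq d j; have [d3|d3] := eqVneq d j.+1;
  rewrite ?mulr1 ?mulr0 ?addr0 ?add0r; by [rewrite d1|rewrite d2|rewrite d3|exfalso; lia].
Qed.

Lemma card_neighbors_same x y :
  #|[set z | e y z & gdist x z == gdist x y]|%:R = aR (gdist x y).
Proof.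
have k_sum : \sum_(z | e y z) (1 : R) = kR by rewrite /kR -(valency y) -sum1dep_card natr_sum.
have := sum_neighbors_split x y (fun=> 1); rewrite /= !mul1r k_sum.
by rewrite card_neighbors_closer card_neighbors_farther /aR => ->; ring.
Qed.

Lemma sum_neighbors x y (F : nat -> R) : let j := gdist x y in
  \sum_(z | e y z) F (gdist x z) = cR j * F j.-1 + aR j * F j + bR j * F j.+1.
Proof.
rewrite /= sum_neighbors_split card_neighbors_closer card_neighbors_same.
by rewrite card_neighbors_farther; ring.
Qed.

Lemma aR_ge0 j : (j <= D)%N -> 0 <= aR j.
Proof. by move=> /exists_gdist [x [y <-]]; rewrite -card_neighbors_same ler0n. Qed.

Lemma sum_neighbors_shell x y i : (0 < i)%N ->
  \sum_(z | e y z) (gdist x z == i)%:R =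
    cR i.+1 * (gdist x y == i.+1)%:R + aR i * (gdist x y == i)%:R
  + bR i.-1 * (gdist x y == i.-1)%:R.
Proof.
move=> i_gt0; rewrite (sum_neighbors x y (fun d => (d == i)%:R)) /=.
move: (gdist x y) => j.
have predE : (j.-1 == i) = (j == i.+1) by case: j => [|j] //=; rewrite eq_sym gtn_eqF.
have succE : (j.+1 == i) = (j == i.-1) by case: i i_gt0 {predE}.
have swapE c (F : nat -> R) : F j * (j == c)%:R = F c * (j == c)%:R.
  by case: eqP => [->|]; rewrite ?mulr0.
by rewrite predE succE (swapE _ cR) (swapE _ aR) (swapE _ bR).
Qed.

Fixpoint cosine_seq (t : R) (j : nat) : R :=
  match j with
  | 0 => 1
  | j1.+1 => match j1 with
             | 0 => t / kR
             | j2.+1 => ((t - aR j1) * cosine_seq t j1 - cR j1 * cosine_seq t j2) / bR j1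
             end
  end.

Lemma cosine_seqSS t j : cosine_seq t j.+2 =
  ((t - aR j.+1) * cosine_seq t j.+1 - cR j.+1 * cosine_seq t j) / bR j.+1.
Proof. by []. Qed.

Lemma cosine_seq_rec t j : (j < D)%N ->
  cR j * cosine_seq t j.-1 + aR j * cosine_seq t j + bR j * cosine_seq t j.+1
  = t * cosine_seq t j.
Proof.
case: j => [_|j lt_jD].
  by rewrite /aR /cR /bR D_gt0 /= -/kR; field; exact: lt0r_neq0 kR_gt0.
by rewrite cosine_seqSS; field; exact: lt0r_neq0 (bR_gt0 lt_jD).
Qed.

Definition end_defect t := cR D * cosine_seq t D.-1 + (aR D - t) * cosine_seq t D.

Lemma sum_neighbors_cosine t x y :
  \sum_(z | e y z) cosine_seq t (gdist x z)
  = t * cosine_seq t (gdist x y) + (gdist x y == D)%:R * end_defect t.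
Proof.
rewrite (sum_neighbors x y (cosine_seq t)) /=.
have := gdist_le_diam x y; rewrite leq_eqVlt => /predU1P [->|lt_dD].
  by rewrite eqxx /bR ltnn /end_defect /=; ring.
by rewrite cosine_seq_rec // (ltn_eqF lt_dD) mul0r addr0.
Qed.

Lemma mulmx_adj (v : 'rV[R]_n) y : (v *m adjmx e R) 0 y = \sum_(z | e y z) v 0 z.
Proof.
rewrite mxE [RHS]big_mkcond; apply: eq_bigr => z _; rewrite !mxE e_sym.
by case: (e y z); rewrite ?mulr1 ?mulr0.
Qed.

Section Eigenvector.
Variables (t : R) (f : 'I_n -> R).
Hypothesis f_eigen : forall y, \sum_(z | e y z) f z = t * f y.
Variable x : 'I_n.

Definition shell_sum i := \sum_y f y * (gdist x y == i)%:R.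

Lemma shell_sum0 : shell_sum 0 = f x.
Proof.
rewrite /shell_sum (bigD1 x) //= gdistxx eqxx mulr1 big1 ?addr0 // => y yx.
by rewrite gdist_eq0 eq_sym (negbTE yx) mulr0.
Qed.

Lemma shell_sum_gt_diam : shell_sum D.+1 = 0.
Proof. by rewrite /shell_sum big1 // => y _; rewrite ltn_eqF ?mulr0 // ltnS gdist_le_diam. Qed.

Lemma shell_sum_rec i : (0 < i)%N ->
  t * shell_sum i = cR i.+1 * shell_sum i.+1 + aR i * shell_sum i + bR i.-1 * shell_sum i.-1.
Proof.
move=> i_gt0; transitivity (\sum_y (\sum_(z | e y z) f z) * (gdist x y == i)%:R).
  by rewrite /shell_sum mulr_sumr; apply: eq_bigr => y _; rewrite f_eigen mulrA.
rewrite -sum_neighbors_sym /shell_sum !mulr_sumr -!big_split /=; apply: eq_bigr => y _.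
by rewrite (sum_neighbors_shell x y i_gt0); ring.
Qed.

Lemma end_defect_shell_sum : end_defect t * shell_sum D = 0.
Proof.
transitivity (\sum_y f y * \sum_(z | e y z) cosine_seq t (gdist x z)
  - \sum_y (\sum_(z | e y z) f z) * cosine_seq t (gdist x y)); last first.
  by rewrite sum_neighbors_sym subrr.
rewrite -sumrB /shell_sum mulr_sumr; apply: eq_bigr => y _.
by rewrite sum_neighbors_cosine f_eigen; ring.
Qed.

Lemma shell_sum_eq0 : shell_sum D = 0 -> shell_sum 0 = 0.
Proof.
move=> gD; suff /(_ D (leqnn D)) : forall s, (s <= D)%N ->
    shell_sum (D - s)%N = 0 /\ shell_sum (D - s).+1 = 0.
  by rewrite subnn => -[].
elim=> [_|s IHs lt_sD]; first by rewrite subn0 gD shell_sum_gt_diam.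
have [g_i g_iS] := IHs (ltnW lt_sD); set i := (D - s)%N in g_i g_iS.
have i_gt0 : (0 < i)%N by rewrite subn_gt0.
rewrite subnS -/i prednK // g_i; split => //.
have := shell_sum_rec i_gt0; rewrite g_i g_iS !mulr0 !add0r => /esym/eqP.
rewrite mulf_eq0 => /orP [|/eqP //]; rewrite gt_eqF // bR_gt0 //.
by rewrite -ltnS prednK // ltnS leq_subr.
Qed.

End Eigenvector.

Lemma eigenvalue_end_defect t : eigenvalue (adjmx e R) t -> end_defect t = 0.
Proof.
case/eigenvalueP => v v_eigen v_neq0.
have f_eigen y : \sum_(z | e y z) v 0 z = t * v 0 y by rewrite -mulmx_adj v_eigen mxE.
have [x vx_neq0] : exists x, v 0 x != 0.
  apply/existsP; apply: contraR v_neq0 => /existsPn v0.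
  by apply/eqP/rowP => x; rewrite mxE; apply/eqP/negbNE/v0.
have /eqP := end_defect_shell_sum f_eigen x; rewrite mulf_eq0 => /orP [/eqP //|/eqP gD].
by have := shell_sum_eq0 f_eigen gD; rewrite shell_sum0 => /eqP; rewrite (negbTE vx_neq0).
Qed.

Lemma eigenvalue_cosine t : end_defect t = 0 -> eigenvalue (adjmx e R) t.
Proof.
move=> E0; have [x _] := exists_gdist (leq0n D); apply/eigenvalueP.
exists (\row_y cosine_seq t (gdist x y)).
  apply/rowP => y; rewrite mulmx_adj !mxE; under eq_bigr do rewrite mxE.
  by rewrite sum_neighbors_cosine E0 mulr0 addr0.
by apply/negP => /eqP/rowP/(_ x); rewrite !mxE gdistxx => /eqP; rewrite oner_eq0.
Qed.

Section ClassicalParameters.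
Variables (b : nat) (alpha beta : R).
Hypothesis classical : classical_params D bi ci b alpha beta.
Hypothesis b_gt1 : (1 < b)%N.

Local Notation gb := (gbr R b).

Lemma gbr0 : gb 0 = 0.
Proof. by rewrite /gbr expr0 subrr mul0r. Qed.

Lemma ltr_gbr i j : (i < j)%N -> gb i < gb j.
Proof.
move=> lt_ij; rewrite /gbr ltr_pM2r ?invr_gt0 ?subr_gt0 ?ltr1n //.
by rewrite ltrD2r -!natrX ltr_nat ltn_exp2l.
Qed.

Lemma gbr_gt0 j : (0 < j)%N -> 0 < gb j.
Proof. by rewrite -gbr0; apply: ltr_gbr. Qed.

Lemma bi_classical i : (i < D)%N -> (bi i)%:R = (gb D - gb i) * (beta - alpha * gb i).
Proof. by case: classical => + _; apply. Qed.

Lemma ci_classical i : (0 < i <= D)%N -> (ci i)%:R = gb i * (1 + alpha * gb i.-1).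
Proof. by case: classical => _; apply. Qed.

Lemma beta_sub_alpha_gt0 i : (i < D)%N -> 0 < beta - alpha * gb i.
Proof.
move=> lt_iD; have := bi_gt0 lt_iD; rewrite -(ltr0n R) bi_classical //.
by rewrite pmulr_rgt0 // subr_gt0 ltr_gbr.
Qed.

Lemma one_add_alpha_gt0 i : (i < D)%N -> 0 < 1 + alpha * gb i.
Proof.
move=> lt_iD; have := ci_gt0 (i := i.+1); rewrite ltn0Sn lt_iD => /(_ isT).
by rewrite -(ltr0n R) ci_classical ?lt_iD // pmulr_rgt0 // gbr_gt0.
Qed.

Lemma beta_gt0 : 0 < beta.
Proof. by have := beta_sub_alpha_gt0 D_gt0; rewrite gbr0 mulr0 subr0. Qed.

Lemma kR_classical : kR = gb D * beta.
Proof. by rewrite /kR bi_classical // gbr0 mulr0 !subr0. Qed.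

Lemma bR_classical j : (j <= D)%N -> bR j = (gb D - gb j) * (beta - alpha * gb j).
Proof.
rewrite /bR leq_eqVlt => /predU1P [->|lt_jD]; last by rewrite lt_jD bi_classical.
by rewrite ltnn subrr mul0r.
Qed.

Lemma cR_classical j : (0 < j <= D)%N -> cR j = gb j * (1 + alpha * gb j.-1).
Proof. by case/andP=> j_gt0 le_jD; rewrite /cR gtn_eqF // ci_classical ?j_gt0. Qed.

Definition theta : R := - gb D.

(* [rho j] is the ratio [u_(j+1) / u_j] of the cosine sequence at [theta]. *)
Definition rho j : R := (1 + alpha * gb j) / (alpha * gb j - beta).

Lemma rho_num_neq0 j : (j < D)%N -> 1 + alpha * gb j != 0.
Proof. by move=> lt_jD; rewrite gt_eqF ?one_add_alpha_gt0. Qed.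

Lemma rho_den_neq0 j : (j < D)%N -> alpha * gb j - beta != 0.
Proof. by move=> lt_jD; rewrite -oppr_eq0 opprB gt_eqF ?beta_sub_alpha_gt0. Qed.

Lemma rho_lt0 j : (j < D)%N -> rho j < 0.
Proof.
move=> lt_jD; rewrite /rho pmulr_rlt0 ?one_add_alpha_gt0 // invr_lt0 subr_lt0.
by rewrite -subr_gt0 beta_sub_alpha_gt0.
Qed.

Lemma rho_first : kR * rho 0 = theta.
Proof.
rewrite kR_classical /rho /theta gbr0 mulr0 addr0 add0r.
by field; rewrite gt_eqF ?beta_gt0.
Qed.

Lemma rho_step j : (0 < j < D)%N -> cR j / rho j.-1 + aR j + bR j * rho j = theta.
Proof.
case/andP => j_gt0 lt_jD; have lt_j1D : (j.-1 < D)%N := leq_ltn_trans (leq_pred j) lt_jD.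
rewrite /aR kR_classical cR_classical ?j_gt0 ?bR_classical 1?ltnW // /rho /theta.
by field; rewrite ?rho_den_neq0 ?rho_num_neq0.
Qed.

Lemma rho_last : cR D / rho D.-1 + aR D = theta.
Proof.
have lt_D1D : (D.-1 < D)%N by rewrite ltn_predL.
rewrite /aR /bR ltnn subr0 kR_classical cR_classical ?D_gt0 ?leqnn // /rho /theta.
by field; rewrite ?rho_den_neq0 ?rho_num_neq0.
Qed.

Lemma cosine_ratio t j : t <= theta -> (j < D)%N ->
  [/\ cosine_seq t j != 0, cosine_seq t j.+1 / cosine_seq t j <= rho j
    & t = theta -> cosine_seq t j.+1 / cosine_seq t j = rho j].
Proof.
move=> le_t; elim: j => [_|j IHj lt_jD].
  have rho0 : rho 0 = theta / kR by rewrite -rho_first; field; exact: lt0r_neq0 kR_gt0.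
  rewrite /= divr1 rho0 oner_eq0; split => //; last by move=> ->.
  by rewrite ler_pM2r // invr_gt0 kR_gt0.
have [u_neq0 ratio_le ratio_eq] := IHj (ltnW lt_jD).
set r := cosine_seq t j.+1 / cosine_seq t j in ratio_le ratio_eq.
have r_lt0 : r < 0 := le_lt_trans ratio_le (rho_lt0 (ltnW lt_jD)).
have uS : cosine_seq t j.+1 = r * cosine_seq t j by rewrite /r mulfVK.
have uS_neq0 : cosine_seq t j.+1 != 0 by rewrite uS mulf_neq0 // lt_eqF.
have bS_gt0 := bR_gt0 lt_jD.
have ratioS : bR j.+1 * (cosine_seq t j.+2 / cosine_seq t j.+1) = t - aR j.+1 - cR j.+1 / r.
  by rewrite cosine_seqSS /r invf_div; field; rewrite uS_neq0 gt_eqF.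
have rhoS : bR j.+1 * rho j.+1 = theta - aR j.+1 - cR j.+1 / rho j.
  by rewrite -(rho_step (j := j.+1)) ?lt_jD //; ring.
split => //; last first.
  by move=> t_theta; apply: (mulfI (lt0r_neq0 bS_gt0)); rewrite ratioS rhoS ratio_eq // t_theta.
rewrite -(ler_pM2l bS_gt0) ratioS rhoS; apply: lerB; first exact: lerB le_t (lexx _).
rewrite ler_pM2l ?cR_gt0 ?ltn0Sn 1?ltnW //.
by rewrite lef_nV2 ?negrE ?rho_lt0 1?ltnW.
Qed.

Lemma end_defect_theta : end_defect theta = 0.
Proof.
have lt_D1D : (D.-1 < D)%N by rewrite ltn_predL.
have [u_neq0 _ /(_ erefl)] := cosine_ratio (lexx theta) lt_D1D; rewrite prednK // => ratio.
have uD : cosine_seq theta D = rho D.-1 * cosine_seq theta D.-1 by rewrite -ratio mulfVK.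
rewrite /end_defect uD; move: (cosine_seq theta D.-1) => u.
by rewrite -rho_last; field; exact: ltr0_neq0 (rho_lt0 lt_D1D).
Qed.

Lemma end_defect_neq0 t : t < theta -> end_defect t != 0.
Proof.
move=> lt_t; have lt_D1D : (D.-1 < D)%N by rewrite ltn_predL.
have [u_neq0 ratio_le _] := cosine_ratio (ltW lt_t) lt_D1D; rewrite prednK // in ratio_le.
set r := _ / _ in ratio_le.
have uD : cosine_seq t D = r * cosine_seq t D.-1 by rewrite /r mulfVK.
have rho_neg := rho_lt0 lt_D1D.
have rho_end : cR D + (aR D - theta) * rho D.-1 = 0.
  by rewrite -rho_last; field; exact: ltr0_neq0.
have aD_sub_gt0 : 0 < aR D - t.
  rewrite subr_gt0 (lt_le_trans lt_t) // (le_trans _ (aR_ge0 (leqnn D))) //.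
  by rewrite oppr_le0 ltW ?gbr_gt0.
have r_end : cR D + (aR D - t) * r < 0.
  rewrite -rho_end ltrD2l (le_lt_trans (y := (aR D - t) * rho D.-1)) ?ler_pM2l //.
  by rewrite ltr_nM2r // ltrD2l ltrN2.
have -> : end_defect t = (cR D + (aR D - t) * r) * cosine_seq t D.-1.
  by rewrite /end_defect uD; ring.
by rewrite mulf_neq0 // ltr0_neq0.
Qed.

Lemma min_eigenvalue_theta t : min_eigenvalue e t -> t = theta.
Proof.
case=> t_eig t_min; apply/le_anti; rewrite t_min ?eigenvalue_cosine ?end_defect_theta //=.
rewrite leNgt; apply/negP => /end_defect_neq0.
by rewrite eigenvalue_end_defect ?eqxx.
Qed.

Section Geometric.
Variable CC : {set {set 'I_n}}.
Hypothesis geometric : geometric_wrt e R (bi 0) CC.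

Lemma clique_of C : C \in CC -> clique e C.
Proof. by case: geometric => delsarte _ /delsarte []. Qed.

Lemma edge_cliques y z : e y z -> #|[set C in CC | (y \in C) && (z \in C)]| = 1%N.
Proof. by case: geometric => _; apply. Qed.

Lemma card_clique C : C \in CC -> #|C|%:R = 1 + beta.
Proof.
case: geometric => delsarte _ /delsarte [_ [t [/min_eigenvalue_theta -> ->]]].
rewrite -/kR kR_classical /theta opprK mulrAC divff ?mul1r //.
exact: lt0r_neq0 (gbr_gt0 D_gt0).
Qed.

Lemma card_cliques_at y : #|[set C in CC | y \in C]|%:R = gb D.
Proof.
have valency_cliques : bi 0 = (\sum_(C | (C \in CC) && (y \in C)) (#|C| - 1))%N.
  rewrite -(valency y) -sum1dep_card.
  transitivity (\sum_(z | e y z) \sum_(C | (C \in CC) && (y \in C)) (z \in C : nat))%N.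
    apply: eq_bigr => z eyz; rewrite sum_nat_indicator -(edge_cliques eyz).
    by apply: eq_card => C; rewrite !inE andbA.
  rewrite exchange_big; apply: eq_bigr => C /andP [CC_C yC].
  rewrite sum_nat_indicator (cardsD1 y C) yC add1n subn1 /=; apply: eq_card => z.
  rewrite !inE; have [->|zy] := eqVneq z y; first by rewrite e_irr.
  apply/andP/idP => [[] //|zC]; split => //.
  by apply: (clique_of CC_C) => //; rewrite eq_sym.
have : kR = #|[set C in CC | y \in C]|%:R * beta.
  rewrite /kR valency_cliques natr_sum -sum1dep_card natr_sum mulr_suml.
  apply: eq_bigr => C /andP [CC_C yC]; rewrite natrB ?card_clique //; last first.
    by rewrite card_gt0; apply/set0Pn; exists y.
  by rewrite mul1r addrC addKr.
by rewrite kR_classical => /mulIf -> //; exact: lt0r_neq0 beta_gt0.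
Qed.

Lemma card_cliques_pair y z :
  #|[set C in CC | (y \in C) && (z \in C)]|%:R = (e y z)%:R + gb D * (y == z)%:R.
Proof.
have [<-|yz] := eqVneq y z.
  rewrite e_irr add0r mulr1 -(card_cliques_at y).
  by congr (_%:R); apply: eq_card => C; rewrite !inE andbb.
rewrite mulr0 addr0; case: (boolP (e y z)) => [eyz|Neyz]; first by rewrite edge_cliques.
rewrite (_ : [set _ in _ | _] = set0) ?cards0 //; apply/setP => C; rewrite !inE.
apply/negP => /andP [CC_C /andP [yC zC]]; case/negP: Neyz.
exact: (clique_of CC_C).
Qed.

Lemma sum_cliques_sqr (f : 'I_n -> R) :
  \sum_(C in CC) (\sum_(y in C) f y) ^+ 2 = \sum_y f y * (\sum_(z | e y z) f z + gb D * f y).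
Proof.
have sqr_sum (C : {set 'I_n}) : (\sum_(y in C) f y) ^+ 2
    = \sum_y \sum_z f y * f z * ((y \in C) && (z \in C))%:R.
  rewrite expr2 big_distrlr /= big_mkcond; apply: eq_bigr => y _.
  rewrite big_mkcond; case: (boolP (y \in C)) => yC; last by rewrite big1 // => z _; rewrite mulr0.
  by rewrite [RHS]big_mkcond; apply: eq_bigr => z _; case: (z \in C); rewrite ?mulr1 ?mulr0.
rewrite (eq_bigr _ (fun C _ => sqr_sum C)) exchange_big; apply: eq_bigr => y _.
rewrite exchange_big /=.
under eq_bigr => z _ do rewrite -mulr_sumr sumr_indicator card_cliques_pair mulrDr.
rewrite big_split /= mulrDr; congr (_ + _).
  by rewrite mulr_sumr [RHS]big_mkcond; apply: eq_bigr => z _; case: (e y z); rewrite ?mulr1 ?mulr0.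
rewrite (bigD1 y) //= eqxx big1 ?addr0 => [|z zy]; first by rewrite /= mulr1; ring.
by rewrite eq_sym (negbTE zy) !mulr0.
Qed.

Lemma sum_clique_cosine x C : C \in CC -> \sum_(y in C) cosine_seq theta (gdist x y) = 0.
Proof.
move=> CC_C; have := sum_cliques_sqr (fun y => cosine_seq theta (gdist x y)).
rewrite [RHS]big1 => [sqr_sums0|y _]; last first.
  by rewrite sum_neighbors_cosine end_defect_theta mulr0 addr0 /theta; ring.
have sqr_ge0_C (B : {set 'I_n}) : B \in CC ->
    0 <= (\sum_(y in B) cosine_seq theta (gdist x y)) ^+ 2 by rewrite sqr_ge0.
by have /eqP := psumr_eq0P sqr_ge0_C sqr_sums0 CC_C; rewrite sqrf_eq0 => /eqP.
Qed.

Lemma card_clique_gdist j C x : (j < D)%N -> C \in CC -> gdistC e x C = j ->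
  #|[set y in C | gdist x y == j]|%:R = 1 + alpha * gb j.
Proof.
move=> lt_jD CC_C dxC; set psi := #|_|.
have [u_neq0 _ /(_ erefl) ratio] := cosine_ratio (lexx theta) lt_jD.
have uS : cosine_seq theta j.+1 = rho j * cosine_seq theta j by rewrite -ratio mulfVK.
have sum_C : \sum_(y in C) cosine_seq theta (gdist x y)
    = ((1 + beta) * rho j + (1 - rho j) * psi%:R) * cosine_seq theta j.
  transitivity (\sum_(y in C) (cosine_seq theta j.+1
      + (cosine_seq theta j - cosine_seq theta j.+1) * (gdist x y == j)%:R)).
    apply: eq_bigr => y yC; have := clique_gdist x (clique_of CC_C) yC; rewrite dxC.
    have [->|dxy_neq] := eqVneq (gdist x y) j; first by rewrite mulr1 addrC subrK.
    by move=> dxy_range; rewrite (_ : gdist x y = j.+1) ?mulr0n ?mulr0 ?addr0 //; lia.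
  rewrite uS; move: (cosine_seq theta j) => uj.
  rewrite big_split /= sumr_const -mulr_sumr sumr_indicator -/psi.
  by rewrite -[_ *+ #|C|]mulr_natr (card_clique CC_C); ring.
have /eqP := sum_clique_cosine x CC_C.
rewrite sum_C mulf_eq0 (negbTE u_neq0) orbF => /eqP psi_eq.
have key : (1 + beta) * (1 + alpha * gb j - psi%:R)
    = (alpha * gb j - beta) * ((1 + beta) * rho j + (1 - rho j) * psi%:R).
  by rewrite /rho; field; rewrite rho_den_neq0.
move: key; rewrite psi_eq mulr0 => /eqP; rewrite mulf_eq0 subr_eq0 => /orP [|/eqP <- //].
by rewrite gt_eqF // addr_gt0 ?ltr01 ?beta_gt0.
Qed.

Lemma card_cliques_gdist j x y : (0 < j <= D)%N -> gdist x y = j ->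
  #|[set C in CC | (x \in C) && (gdistC e y C == j.-1)]|%:R = gb j.
Proof.
case/andP => j_gt0 le_jD dxy; have dyx : gdist y x = j by rewrite gdist_sym.
set T := [set C in CC | _].
set Z := [set z | e x z & gdist y z == j.-1].
have card_Z : #|Z| = ci j by rewrite /Z -dyx ci_card // dyx.
have one_clique z : z \in Z -> (\sum_(C in T) (z \in C : nat))%N = 1%N.
  rewrite inE => /andP [exz /eqP dyz]; rewrite sum_nat_indicator -(edge_cliques exz).
  apply: eq_card => C; rewrite !inE -!andbA; apply: andb_id2l => CC_C.
  apply: andb_id2l => xC; apply/andP/idP => [[] //|zC]; split => //.
  by rewrite (gdistC_clique_closer (clique_of CC_C) xC zC) dyx ?dyz.
have lt_j1D : (j.-1 < D)%N by rewrite (leq_trans _ le_jD) // ltn_predL.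
have count_pairs : (ci j = \sum_(C in T) #|[set z in C | gdist y z == j.-1]|)%N.
  rewrite -card_Z -sum1_card (eq_bigr _ (fun z zZ => esym (one_clique z zZ))) exchange_big.
  apply: eq_bigr => C; rewrite inE => /andP [CC_C /andP [xC _]].
  rewrite sum_nat_indicator; apply: eq_card => z; rewrite !inE.
  apply/idP/idP => [/andP [/andP [_ ->] ->] // | /andP [zC dyz]].
  rewrite zC dyz !andbT; apply: (clique_of CC_C) => //.
  by apply: contraTneq dyz => <-; rewrite dyx gtn_eqF // ltn_predL.
have : (ci j)%:R = #|T|%:R * (1 + alpha * gb j.-1).
  rewrite count_pairs natr_sum -sum1_card natr_sum mulr_suml; apply: eq_bigr => C.
  by rewrite inE => /andP [CC_C /andP [_ /eqP dyC]]; rewrite card_clique_gdist ?mul1r.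
by rewrite ci_classical ?j_gt0 // => /mulIf -> //; exact: rho_num_neq0.
Qed.

End Geometric.

End ClassicalParameters.

End DistanceRegular.

End Graph.

Local Open Scope ring_scope.

Theorem lemma16 (R : rcfType) (n : nat) (e : rel 'I_n) (D : nat)
  (bi ci : nat -> nat) (b : nat) (alpha beta : R) (CC : {set {set 'I_n}}) :
  distance_regular e D bi ci ->
  classical_params D bi ci b alpha beta ->
  (2 <= b)%N -> (3 <= D)%N ->
  geometric_wrt e R (bi 0) CC ->
  (forall (j : nat) (C : {set 'I_n}) (x : 'I_n), (j < D)%N -> C \in CC ->
     gdistC e x C = j ->
     (#|[set y in C | gdist e x y == j]|%:R : R) = 1 + alpha * gbr R b j) /\
  (forall (j : nat) (x y : 'I_n), (1 <= j <= D)%N -> gdist e x y = j ->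
     (#|[set C in CC | (x \in C) && (gdistC e y C == j.-1)]|%:R : R) = gbr R b j).
Proof.
case=> [[e_sym e_irr] e_conn diam ci_card bi_card] classical b_gt1 D_ge3 geometric.
have D_gt0 : (0 < D)%N by apply: leq_trans D_ge3.
split=> [j C x | j x y].
  exact: (card_clique_gdist e_sym e_irr e_conn diam D_gt0 ci_card bi_card
            classical b_gt1 geometric).
exact: (card_cliques_gdist e_sym e_irr e_conn diam D_gt0 ci_card bi_card
          classical b_gt1 geometric).
Qed.
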